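(* Let $\Gamma$ be a reduct of $(\mathbb{Z};<)$ with qe-degree $q$, let $\kappa_1,\kappa_2$ be linear orders, let $S\subseteq\kappa_1.\mathbb{Z}$, and let $f,g\colon S\to\kappa_2.\mathbb{Z}$ satisfy $f\sim_q g$. Then $f$ is a homomorphism from $(\kappa_1.\Gamma)[S]$ to $\kappa_2.\Gamma$ if and only if $g$ is.
   Context: For a linear order $\kappa$, $\kappa.\mathbb{Z}=\kappa\times\mathbb{Z}$ with the lexicographic order; $(a,z)+k=(a,z+k)$. For $x,y\in\kappa.\mathbb{Z}$: $x-y=k\in\mathbb{Z}$ if $x=y+k$, and $x-y=\pm\infty$ if $x,y$ lie in different copies (sign $+$ iff $x>y$). For a reduct $\Gamma$ of $(\mathbb{Z};<)$, $\kappa.\Gamma$ interprets each relation symbol by the relation defined over $(\kappa.\mathbb{Z};<)$ by a first-order formula defining it over $(\mathbb{Z};<)$; $(\kappa.\Gamma)[S]$ is the induced substructure on $S$. The qe-degree of a relation $R$ first-order definable in $(\mathbb{Z};<)$ is the least $q$ such that $R$ has a quantifier-free definition in which every atomic formula has the form $x<y+k$ or $x\le y+k$ with $k\in\mathbb{Z}$, $|k|\le q$; the qe-degree of $\Gamma$ is the supremum over its relations. For $f\colon S\to\kappa.\mathbb{Z}$ and $s\in\mathbb{N}$, $x,y\in S$ are $(f,s)$-connected if there is a sequence $x=u_1,\dots,u_k=y$ in $S$ with $|f(u_i)-f(u_{i+1})|\le s$ for all $i$. For $f,g\colon S\to\kappa.\mathbb{Z}$, $f\sim_s g$ means: $(f,s)$-connectivity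 and $(g,s)$-connectivity coincide; for $(f,s)$-connected $x,y$ we have $f(x)-f(y)=g(x)-g(y)$; and for $x,y$ not $(f,s)$-connected, $f(x)<f(y)\iff g(x)<g(y)$. *)

From Stdlib Require Import ZArith List Relations.
Import ListNotations.
Open Scope Z_scope.

(** * First-order formulas in the language {<} (with equality).
    Variables are de Bruijn indices: at top level, variable i refers to the
    i-th entry of the tuple; each quantifier binds index 0. *)
Inductive fo : Type :=
| FLt (i j : nat) | FEq (i j : nat) | FTrue | FFalse
| FNot (p : fo) | FAnd (p r : fo) | FOr (p r : fo) | FImp (p r : fo)
| FEx (p : fo) | FAll (p : fo).

Fixpoint fo_sat {T : Type} (lt : T -> T -> Prop) (e : list T) (p : fo) : Prop :=
  match p with
  | FLt i j => match nth_error e i, nth_error e j with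
               | Some a, Some b => lt a b | _, _ => False end
  | FEq i j => match nth_error e i, nth_error e j with
               | Some a, Some b => a = b | _, _ => False end
  | FTrue => True
  | FFalse => False
  | FNot p => ~ fo_sat lt e p
  | FAnd p r => fo_sat lt e p /\ fo_sat lt e r
  | FOr p r => fo_sat lt e p \/ fo_sat lt e r
  | FImp p r => fo_sat lt e p -> fo_sat lt e r
  | FEx p => exists x : T, fo_sat lt (x :: e) p
  | FAll p => forall x : T, fo_sat lt (x :: e) p
  end.

Fixpoint fo_fv_below (n : nat) (p : fo) : Prop :=
  match p with
  | FLt i j | FEq i j => (i < n)%nat /\ (j < n)%nat
  | FTrue | FFalse => True
  | FNot p => fo_fv_below n p
  | FAnd p r | FOr p r | FImp p r => fo_fv_below n p /\ fo_fv_below n r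
  | FEx p | FAll p => fo_fv_below (S n) p
  end.

Inductive qf : Type :=
| QLt (i j : nat) (k : Z) | QLe (i j : nat) (k : Z) | QTrue | QFalse
| QNot (p : qf) | QAnd (p r : qf) | QOr (p r : qf).

Fixpoint qf_sat (e : list Z) (p : qf) : Prop :=
  match p with
  | QLt i j k => match nth_error e i, nth_error e j with
                 | Some a, Some b => a < b + k | _, _ => False end
  | QLe i j k => match nth_error e i, nth_error e j with
                 | Some a, Some b => a <= b + k | _, _ => False end
  | QTrue => True
  | QFalse => False
  | QNot p => ~ qf_sat e p
  | QAnd p r => qf_sat e p /\ qf_sat e r
  | QOr p r => qf_sat e p \/ qf_sat e r
  end.

Fixpoint qf_bound (b : nat) (p : qf) : Prop :=
  match p with
  | QLt _ _ k | QLe _ _ k => Z.abs k <= Z.of_nat b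
  | QTrue | QFalse => True
  | QNot p => qf_bound b p
  | QAnd p r | QOr p r => qf_bound b p /\ qf_bound b r
  end.

(** * Reducts of (Z;<): relational structures on Z each of whose relations
    is given by a first-order {<}-formula with free variables among the
    arguments. *)
Record reduct : Type := {
  sym : Type;
  arity : sym -> nat;
  defn : sym -> fo;
  defn_wf : forall i, fo_fv_below (arity i) (defn i)
}.

Definition qf_def_bound (phi : fo) (n : nat) (b : nat) : Prop :=
  exists psi : qf, qf_bound b psi /\
    forall t : list Z, length t = n -> (fo_sat Z.lt t phi <-> qf_sat t psi).

Definition rel_qe_degree (phi : fo) (n : nat) (d : nat) : Prop :=
  qf_def_bound phi n d /\ forall b, qf_def_bound phi n b -> (d <= b)%nat.

Definition qe_degree (G : reduct) (q : nat) : Prop :=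
  (forall i, exists d, rel_qe_degree (defn G i) (arity G i) d) /\
  (forall i d, rel_qe_degree (defn G i) (arity G i) d -> (d <= q)%nat) /\
  (forall q', (forall i d, rel_qe_degree (defn G i) (arity G i) d -> (d <= q')%nat)
              -> (q <= q')%nat).

Record linorder : Type := {
  lo_car :> Type;
  lo_lt : lo_car -> lo_car -> Prop;
  lo_irrefl : forall x, ~ lo_lt x x;
  lo_trans : forall x y z, lo_lt x y -> lo_lt y z -> lo_lt x z;
  lo_total : forall x y, lo_lt x y \/ x = y \/ lo_lt y x
}.

Definition KZ (K : linorder) : Type := (lo_car K * Z)%type.

Definition kz_lt (K : linorder) (x y : KZ K) : Prop :=
  lo_lt K (fst x) (fst y) \/ (fst x = fst y /\ snd x < snd y).

Inductive ext : Type := Fin (k : Z) | PInf | NInf.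

(** diff_is x y d  :<->  x - y = d *)
Definition diff_is (K : linorder) (x y : KZ K) (d : ext) : Prop :=
  match d with
  | Fin k => x = (fst y, snd y + k)
  | PInf => fst x <> fst y /\ kz_lt K y x
  | NInf => fst x <> fst y /\ kz_lt K x y
  end.

Section Sim.
Variables (K1 K2 : linorder) (S : KZ K1 -> Prop).

Definition close (f : {x | S x} -> KZ K2) (s : nat) (u v : {x | S x}) : Prop :=
  exists k, diff_is K2 (f u) (f v) (Fin k) /\ Z.abs k <= Z.of_nat s.

Definition connected (f : {x | S x} -> KZ K2) (s : nat) : relation {x | S x} :=
  clos_refl_trans _ (close f s).

Definition sim (s : nat) (f g : {x | S x} -> KZ K2) : Prop :=
  (forall x y, connected f s x y <-> connected g s x y) /\
  (forall x y, connected f s x y ->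
     forall d, diff_is K2 (f x) (f y) d <-> diff_is K2 (g x) (g y) d) /\
  (forall x y, ~ connected f s x y -> (kz_lt K2 (f x) (f y) <-> kz_lt K2 (g x) (g y))).

Definition is_hom (G : reduct) (f : {x | S x} -> KZ K2) : Prop :=
  forall (i : sym G) (t : list {x | S x}), length t = arity G i ->
    fo_sat (kz_lt K1) (map (@proj1_sig _ _) t) (defn G i) ->
    fo_sat (kz_lt K2) (map f t) (defn G i).
End Sim.

From Stdlib Require Import ZArith List Relations Classical Lia.
Open Scope Z_scope.

(* Both ℤ and κ.ℤ are ℤ-chains: linear orders with a free ℤ-action whose orbits
   are convex. Between two ℤ-chains, tuples with the same order type and the same
   differences below 2^r satisfy the same {<}-formulas of quantifier depth r (an
   Ehrenfeucht–Fraïssé game in which each round halves the distance bound), and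
   every tuple of κ.ℤ has such a twin in ℤ. Hence a quantifier-free definition
   over ℤ with offsets at most q stays a definition in κ.ℤ, and whether f maps a
   tuple into a relation of κ.Γ depends only on the comparisons f x < f y + k with
   |k| ≤ q. These agree for f and g when f ∼_q g: inside an (f,q)-connected class
   the differences coincide, and across classes f x is more than q away from f y,
   so the comparison reduces to f x < f y, which ∼_q preserves. *)

Record zchain : Type := {
  zc :> Type;
  zlt : zc -> zc -> Prop;
  zsh : zc -> Z -> zc;
  zlt_irrefl : forall x, ~ zlt x x;
  zlt_trans : forall x y z, zlt x y -> zlt y z -> zlt x z;
  zlt_total : forall x y, zlt x y \/ x = y \/ zlt y x;
  zsh0 : forall x, zsh x 0 = x;
  zshD : forall x a b, zsh (zsh x a) b = zsh x (a + b);
  zlt_sh2 : forall x a b, zlt (zsh x a) (zsh x b) <-> a < b;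
  orbit_convex : forall x y, (forall k, y <> zsh x k) -> zlt x y ->
    forall k, zlt (zsh x k) y
}.
Arguments zlt {z0}.
Arguments zsh {z0}.
Infix "≺" := zlt (at level 70).
Infix "⊕" := zsh (at level 50, left associativity).

Section ZChainTheory.
Variable T : zchain.
Implicit Types x y : T.

Lemma zlt_asym x y : x ≺ y -> ~ y ≺ x.
Proof. intros H1 H2. exact (zlt_irrefl T x (zlt_trans T _ _ _ H1 H2)). Qed.

Lemma zlt_iff_not x y : x ≺ y <-> ~ y ≺ x /\ x <> y.
Proof.
  split.
  - intro H. split; [exact (zlt_asym _ _ H)|intros <-; exact (zlt_irrefl T _ H)].
  - intros [H1 H2]. destruct (zlt_total T x y) as [h|[h|h]]; [exact h|congruence|tauto].
Qed.

Lemma zsh_inj x a b : x ⊕ a = x ⊕ b -> a = b.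
Proof.
  intro E. destruct (Z.lt_trichotomy a b) as [h|[h|h]]; [|exact h|];
    apply (zlt_sh2 T x) in h; rewrite E in h; destruct (zlt_irrefl T _ h).
Qed.

Lemma zsh_eq_sym x y k : y = x ⊕ k <-> x = y ⊕ (-k).
Proof.
  split; intros ->; rewrite zshD.
  - rewrite Z.add_opp_diag_r, zsh0; reflexivity.
  - rewrite Z.add_opp_diag_l, zsh0; reflexivity.
Qed.

Lemma zsh_eq_self x k : x = x ⊕ k <-> k = 0.
Proof.
  split; [|intros ->; rewrite zsh0; reflexivity].
  intro E. apply (zsh_inj x). rewrite zsh0. symmetry. exact E.
Qed.

Lemma zlt_sh_r x m : x ≺ x ⊕ m <-> 0 < m.
Proof. rewrite <- (zlt_sh2 T x), zsh0. reflexivity. Qed.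

Lemma zlt_sh_l x m : x ⊕ m ≺ x <-> m < 0.
Proof. rewrite <- (zlt_sh2 T x m 0), zsh0. reflexivity. Qed.

Lemma zsh_nonneg x y m : (y = x \/ x ≺ y) -> y = x ⊕ m -> 0 <= m.
Proof.
  intros [Hy|Hy] ->.
  - symmetry in Hy. apply zsh_eq_self in Hy. lia.
  - apply zlt_sh_r in Hy. lia.
Qed.

Lemma orbit_convex_l x y : (forall k, y <> x ⊕ k) -> y ≺ x -> forall k, y ≺ x ⊕ k.
Proof.
  intros Hy Hlt k. destruct (zlt_total T y (x ⊕ k)) as [h|[h|h]]; [exact h| |].
  - destruct (Hy k h).
  - assert (Hy' : forall j, y <> x ⊕ k ⊕ j) by (intros j; rewrite zshD; apply Hy).
    pose proof (orbit_convex T _ _ Hy' h (-k)) as H.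
    rewrite zshD, Z.add_opp_diag_r, zsh0 in H. destruct (zlt_asym _ _ Hlt H).
Qed.

Lemma zlt_sh_both x y m : x ≺ y <-> x ⊕ m ≺ y ⊕ m.
Proof.
  destruct (classic (exists j, y = x ⊕ j)) as [[j ->]|Hy].
  - rewrite zlt_sh_r, zshD, zlt_sh2. lia.
  - assert (Hy' : forall j, y <> x ⊕ j) by (intros j E; apply Hy; eauto).
    assert (Hx' : forall j, x <> y ⊕ j).
    { intros j E. apply (Hy' (-j)), zsh_eq_sym. rewrite Z.opp_involutive. exact E. }
    assert (Hfwd : forall u v : T, (forall j, v <> u ⊕ j) -> u ≺ v -> u ⊕ m ≺ v ⊕ m).
    { intros u v Hv H. apply orbit_convex_l; [|exact (orbit_convex T _ _ Hv H m)].
      intros j E. apply (Hv (m - j)). apply zsh_eq_sym in E. rewrite E, zshD. reflexivity. }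
    split; [apply Hfwd, Hy'|].
    intro H. destruct (zlt_total T x y) as [h|[h|h]]; [exact h| |].
    + destruct (Hx' 0). rewrite zsh0. exact h.
    + destruct (zlt_asym _ _ H (Hfwd y x Hx' h)).
Qed.

Lemma zlt_sh_move (a b : T) k : a ⊕ k ≺ b <-> a ≺ b ⊕ (-k).
Proof. rewrite (zlt_sh_both _ _ (-k)), zshD, Z.add_opp_diag_r, zsh0. reflexivity. Qed.

Lemma zlt_sh_far_l (a b : T) k :
  (forall m, Z.abs m <= Z.abs k -> b <> a ⊕ m) -> (a ⊕ k ≺ b <-> a ≺ b).
Proof.
  intro Hf. destruct (classic (exists m, b = a ⊕ m)) as [[m ->]|Hn].
  - assert (Z.abs k < Z.abs m) by (apply Z.nle_gt; intro h; exact (Hf m h eq_refl)).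
    rewrite zlt_sh2, zlt_sh_r. lia.
  - assert (Hn' : forall m, b <> a ⊕ m) by (intros m E; apply Hn; eauto).
    split; [|intro H; exact (orbit_convex T _ _ Hn' H k)].
    intro H. apply zlt_iff_not. split.
    + intro h. exact (zlt_asym _ _ H (orbit_convex_l _ _ Hn' h k)).
    + intro E. apply (Hn' 0). rewrite zsh0. symmetry. exact E.
Qed.

Lemma zlt_sh_far_r (a b : T) k :
  (forall m, Z.abs m <= Z.abs k -> a <> b ⊕ m) -> (a ≺ b ⊕ k <-> a ≺ b).
Proof.
  intro Hf. rewrite <- (Z.opp_involutive k) at 1. rewrite <- zlt_sh_move.
  apply zlt_sh_far_l. intros m Hm E. apply (Hf (-m)); [lia|].
  apply zsh_eq_sym. rewrite Z.opp_involutive. exact E.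
Qed.

Lemma zlt_between (a x : T) m : a ≺ x -> x ≺ a ⊕ m -> exists k, x = a ⊕ k /\ 0 < k < m.
Proof.
  intros H1 H2. destruct (classic (exists k, x = a ⊕ k)) as [[k ->]|Hn].
  - exists k. rewrite zlt_sh_r in H1. rewrite zlt_sh2 in H2. split; [reflexivity|lia].
  - assert (Hn' : forall k, x <> a ⊕ k) by (intros k E; apply Hn; eauto).
    destruct (zlt_asym _ _ H2 (orbit_convex T _ _ Hn' H1 m)).
Qed.

Lemma zsh_far_across (a x b : T) N : a ≺ x -> x ≺ b ->
  (forall k, Z.abs k < N -> a <> x ⊕ k) -> (forall k, Z.abs k < N -> b <> x ⊕ k) ->
  forall m, Z.abs m < 2 * N -> b <> a ⊕ m.
Proof.
  intros Hax Hxb Ha Hb m Hm ->.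
  destruct (zlt_between a x m Hax Hxb) as [j [Hx Hj]].
  assert (N <= j).
  { apply Z.nlt_ge. intro h. apply (Ha (-j)); [lia|]. apply (zsh_eq_sym a x j), Hx. }
  apply (Hb (m - j)); [lia|]. rewrite Hx, zshD. f_equal. lia.
Qed.

End ZChainTheory.

Definition pair_equiv {T1 T2 : zchain} (N : Z) (a b : T1) (c d : T2) : Prop :=
  (a ≺ b <-> c ≺ d) /\ (forall k, Z.abs k < N -> (b = a ⊕ k <-> d = c ⊕ k)).

Definition partial_iso {T1 T2 : zchain} (N : Z) (l : list (T1 * T2)) : Prop :=
  forall p p', In p l -> In p' l -> pair_equiv N (fst p) (fst p') (snd p) (snd p').

Section PairEquiv.
Variables T1 T2 : zchain.
Implicit Types (a b : T1) (c d : T2).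

Lemma pair_equiv_refl N a c : pair_equiv N a a c c.
Proof.
  split.
  - split; intro h; destruct (zlt_irrefl _ _ h).
  - intros k _. rewrite !zsh_eq_self. reflexivity.
Qed.

Lemma pair_equiv_eq N a b c d : 0 < N -> pair_equiv N a b c d -> (b = a <-> d = c).
Proof. intros HN [_ Hsh]. rewrite <- (zsh0 _ a), <- (zsh0 _ c). apply Hsh. lia. Qed.

Lemma pair_equiv_sym N a b c d : 0 < N -> pair_equiv N a b c d -> pair_equiv N b a d c.
Proof.
  intros HN Hab. pose proof (pair_equiv_eq N a b c d HN Hab) as Heq. destruct Hab as [Hlt Hsh].
  split.
  - rewrite (zlt_iff_not _ b a), (zlt_iff_not _ d c). tauto.
  - intros k Hk. rewrite (zsh_eq_sym _ b a k), (zsh_eq_sym _ d c k). apply Hsh. lia.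
Qed.

Lemma pair_equiv_sh N a c k m : pair_equiv N (a ⊕ k) (a ⊕ m) (c ⊕ k) (c ⊕ m).
Proof.
  split; [rewrite !zlt_sh2; reflexivity|].
  intros j _. rewrite !zshD.
  split; intro E; apply zsh_inj in E; rewrite E; reflexivity.
Qed.

Lemma pair_equiv_far N a b c d :
  (forall k, Z.abs k < N -> b <> a ⊕ k) -> (forall k, Z.abs k < N -> d <> c ⊕ k) ->
  (a ≺ b <-> c ≺ d) -> pair_equiv N a b c d.
Proof.
  intros Hb Hd Hlt. split; [exact Hlt|].
  intros k Hk. specialize (Hb k Hk). specialize (Hd k Hk). tauto.
Qed.

End PairEquiv.

Lemma partial_iso_mono {T1 T2 : zchain} N N' (l : list (T1 * T2)) :
  N' <= N -> partial_iso N l -> partial_iso N' l.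
Proof.
  intros HN Hl p p' Hp Hp'. destruct (Hl p p' Hp Hp') as [Hlt Hsh].
  split; [exact Hlt|]. intros k Hk. apply Hsh. lia.
Qed.

Lemma partial_iso_cons {T1 T2 : zchain} N (l : list (T1 * T2)) x y :
  0 < N -> partial_iso N l ->
  (forall p, In p l -> pair_equiv N x (fst p) y (snd p)) -> partial_iso N ((x, y) :: l).
Proof.
  intros HN Hl Hx p p' [<-|Hp] [<-|Hp'].
  - apply pair_equiv_refl.
  - exact (Hx p' Hp').
  - exact (pair_equiv_sym _ _ _ _ _ _ _ HN (Hx p Hp)).
  - exact (Hl p p' Hp Hp').
Qed.

Definition swap_pairs {A B : Type} (l : list (A * B)) : list (B * A) :=
  map (fun p => (snd p, fst p)) l.

Lemma swap_pairs_involutive {A B : Type} (l : list (A * B)) : swap_pairs (swap_pairs l) = l.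
Proof.
  unfold swap_pairs. rewrite map_map. rewrite <- (map_id l) at 2.
  apply map_ext. intros [a b]. reflexivity.
Qed.

Lemma partial_iso_swap {T1 T2 : zchain} N (l : list (T1 * T2)) :
  0 < N -> partial_iso N l -> partial_iso N (swap_pairs l).
Proof.
  intros HN Hl p p' Hp Hp'. unfold swap_pairs in Hp, Hp'.
  apply in_map_iff in Hp as [[a c] [<- Hp]]. apply in_map_iff in Hp' as [[b d] [<- Hp']].
  destruct (Hl _ _ Hp Hp') as [Hlt Hsh]. split; [symmetry; exact Hlt|].
  intros k Hk. symmetry. exact (Hsh k Hk).
Qed.

Lemma partial_iso_zlt_sh {T1 T2 : zchain} N (l : list (T1 * T2)) p p' k :
  partial_iso N l -> In p l -> In p' l -> Z.abs k < N ->
  (fst p ≺ fst p' ⊕ k <-> snd p ≺ snd p' ⊕ k).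
Proof.
  intros Hl Hp Hp' Hk.
  destruct (Hl p' p Hp' Hp) as [_ Hsh].
  destruct (classic (exists m, Z.abs m <= Z.abs k /\ fst p = fst p' ⊕ m)) as [[m [Hm E]]|Hf].
  - assert (E' : snd p = snd p' ⊕ m) by (apply Hsh; [lia|exact E]).
    rewrite E, E', !zlt_sh2. reflexivity.
  - assert (Hf' : forall m, Z.abs m <= Z.abs k -> snd p <> snd p' ⊕ m).
    { intros m Hm E. apply Hf. exists m. split; [exact Hm|]. apply Hsh; [lia|exact E]. }
    rewrite !zlt_sh_far_r; [apply (Hl p p' Hp Hp')|exact Hf'|].
    intros m Hm E. apply Hf. eauto.
Qed.

Lemma list_max_exists {A : Type} (R : A -> A -> Prop) (P : A -> Prop) (l : list A) :
  (forall x y z, R x y -> R y z -> R x z) -> (forall x y, R x y \/ x = y \/ R y x) ->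
  (forall a, In a l -> ~ P a) \/
  (exists a, In a l /\ P a /\ forall b, In b l -> P b -> b = a \/ R b a).
Proof.
  intros Rtr Rtot. induction l as [|h t [Hn|[a [Ha [Pa Hmax]]]]].
  - left. intros a [].
  - destruct (classic (P h)) as [Ph|Ph].
    + right. exists h. split; [left; reflexivity|split; [exact Ph|]].
      intros b [<-|Hb] Pb; [left; reflexivity|destruct (Hn b Hb Pb)].
    + left. intros b [<-|Hb]; [exact Ph|exact (Hn b Hb)].
  - destruct (classic (P h /\ R a h)) as [[Ph Rah]|Hc].
    + right. exists h. split; [left; reflexivity|split; [exact Ph|]].
      intros b [<-|Hb] Pb; [left; reflexivity|].
      right. destruct (Hmax b Hb Pb) as [->|Rba]; [exact Rah|exact (Rtr _ _ _ Rba Rah)].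
    + right. exists a. split; [right; exact Ha|split; [exact Pa|]].
      intros b [<-|Hb] Pb; [|exact (Hmax b Hb Pb)].
      destruct (Rtot h a) as [h'|[h'|h']]; [right; exact h'|left; exact h'|].
      destruct (Hc (conj Pb h')).
Qed.

Section Extension.
Variables (T1 T2 : zchain) (N : Z) (l : list (T1 * T2)) (x : T1).
Hypotheses (HN : 0 < N) (Hl : partial_iso (2 * N) l).

Lemma extend_near a c k : In (a, c) l -> Z.abs k < N -> x = a ⊕ k ->
  forall p, In p l -> pair_equiv N x (fst p) (c ⊕ k) (snd p).
Proof.
  intros Hac Hk Hx [b d] Hbd. cbn [fst snd]. rewrite Hx.
  destruct (Hl _ _ Hac Hbd) as [Hlt Hsh]. cbn [fst snd] in Hlt, Hsh.
  destruct (classic (exists m, Z.abs m < 2 * N /\ b = a ⊕ m)) as [[m [Hm ->]]|Hf].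
  - rewrite (proj1 (Hsh m Hm) eq_refl). apply pair_equiv_sh.
  - assert (Hfa : forall m, Z.abs m < 2 * N -> b <> a ⊕ m) by (intros m Hm E; apply Hf; eauto).
    assert (Hfc : forall m, Z.abs m < 2 * N -> d <> c ⊕ m)
      by (intros m Hm E; apply (Hfa m Hm), Hsh; assumption).
    apply pair_equiv_far.
    + intros j Hj. rewrite zshD. apply Hfa. lia.
    + intros j Hj. rewrite zshD. apply Hfc. lia.
    + rewrite !zlt_sh_far_l; [exact Hlt| |]; intros m Hm; [apply Hfc|apply Hfa]; lia.
Qed.

Hypothesis Hfar : forall p, In p l -> forall k, Z.abs k < N -> fst p <> x ⊕ k.

Lemma extend_far_below c0 :
  (forall p, In p l -> x ≺ fst p) -> (forall p, In p l -> snd p = c0 \/ c0 ≺ snd p) ->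
  forall p, In p l -> pair_equiv N x (fst p) (c0 ⊕ (-N)) (snd p).
Proof.
  intros Habove Hmin p Hp. apply pair_equiv_far; [exact (Hfar p Hp)| |].
  - intros k Hk E. rewrite zshD in E. pose proof (zsh_nonneg _ _ _ _ (Hmin p Hp) E). lia.
  - split; intros _; [|exact (Habove p Hp)].
    destruct (Hmin p Hp) as [->|h]; [|eapply zlt_trans; [|exact h]]; apply zlt_sh_l; lia.
Qed.

Lemma extend_far_above a c : In (a, c) l -> a ≺ x ->
  (forall p, In p l -> fst p ≺ x -> fst p = a \/ fst p ≺ a) ->
  forall p, In p l -> pair_equiv N x (fst p) (c ⊕ N) (snd p).
Proof.
  intros Hac Hax Hmax [b d] Hbd. cbn [fst snd].
  destruct (Hl _ _ Hac Hbd) as [Hlt Hsh]. cbn [fst snd] in Hlt, Hsh.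
  destruct (zlt_total T1 b x) as [Hbx|[Hbx|Hxb]].
  - assert (Hdc : c = d \/ d ≺ c).
    { destruct (Hmax _ Hbd Hbx) as [Hb|Hb]; cbn [fst] in Hb.
      - left. subst b. symmetry.
        apply (pair_equiv_eq _ _ (2 * N) _ _ _ _ ltac:(lia) (Hl _ _ Hac Hbd)). reflexivity.
      - right. apply (Hl _ _ Hbd Hac). exact Hb. }
    assert (Hdy : d ≺ c ⊕ N)
      by (destruct Hdc as [<-|h]; [|eapply zlt_trans; [exact h|]]; apply zlt_sh_r; lia).
    apply pair_equiv_far; [exact (Hfar _ Hbd)| |].
    + intros k Hk E. rewrite zshD in E. apply zsh_eq_sym in E.
      pose proof (zsh_nonneg _ _ _ _ Hdc E). lia.
    + split; intro h; exfalso; [exact (zlt_asym _ _ _ h Hbx)|exact (zlt_asym _ _ _ h Hdy)].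
  - destruct (Hfar _ Hbd 0 ltac:(lia)). cbn [fst]. rewrite zsh0. exact Hbx.
  - pose proof (zsh_far_across _ a x b N Hax Hxb (Hfar _ Hac) (Hfar _ Hbd)) as Hfa.
    assert (Hfc : forall m, Z.abs m < 2 * N -> d <> c ⊕ m)
      by (intros m Hm E; apply (Hfa m Hm), Hsh; assumption).
    apply pair_equiv_far; [exact (Hfar _ Hbd)| |].
    + intros k Hk. rewrite zshD. apply Hfc. lia.
    + split; intros _; [|exact Hxb].
      apply zlt_sh_far_l; [intros m Hm; apply Hfc; lia|]. apply Hlt. eapply zlt_trans; eauto.
Qed.

End Extension.

Lemma partial_iso_extend {T1 T2 : zchain} N (l : list (T1 * T2)) (x : T1) :
  0 < N -> partial_iso (2 * N) l -> inhabited T2 -> exists y, partial_iso N ((x, y) :: l).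
Proof.
  intros HN Hl [y0].
  (* [x] either copies its offset from a point of [l] within distance [N], or is
     placed [N] above the largest point below it, or [N] below the least point. *)
  enough (Hy : exists y, forall p, In p l -> pair_equiv N x (fst p) y (snd p)).
  { destruct Hy as [y Hy]. exists y. apply partial_iso_cons; [exact HN| |exact Hy].
    apply (partial_iso_mono (2 * N)); [lia|exact Hl]. }
  destruct (classic (exists a c k, In (a, c) l /\ Z.abs k < N /\ x = a ⊕ k))
    as [[a [c [k [Hac [Hk Hx]]]]]|Hnear].
  { exists (c ⊕ k). exact (extend_near _ _ _ _ _ HN Hl a c k Hac Hk Hx). }
  assert (Hfar : forall p, In p l -> forall k, Z.abs k < N -> fst p <> x ⊕ k).
  { intros [a c] Hp k Hk E. apply Hnear. exists a, c, (-k).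
    split; [exact Hp|split; [lia|apply (zsh_eq_sym _ x a k), E]]. }
  destruct (list_max_exists zlt (fun a => a ≺ x) (map fst l) (zlt_trans T1) (zlt_total T1))
    as [Hnone|[a [Ha [Hax Hmax]]]].
  - assert (Habove : forall p, In p l -> x ≺ fst p).
    { intros p Hp. destruct (zlt_total T1 x (fst p)) as [h|[h|h]]; [exact h| |].
      - destruct (Hfar p Hp 0 ltac:(lia)). rewrite zsh0. symmetry. exact h.
      - destruct (Hnone _ (in_map fst _ _ Hp) h). }
    assert (Htot : forall u v : T2, v ≺ u \/ u = v \/ u ≺ v)
      by (intros u v; destruct (zlt_total T2 v u) as [h|[h|h]]; auto).
    destruct (list_max_exists (fun u v : T2 => v ≺ u) (fun _ => True) (map snd l)
                (fun u v w h1 h2 => zlt_trans T2 _ _ _ h2 h1) Htot)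
      as [Hempty|[c0 [_ [_ Hmin]]]].
    + exists y0. intros p Hp. destruct (Hempty _ (in_map snd _ _ Hp) I).
    + exists (c0 ⊕ (-N)). apply (extend_far_below _ _ _ _ _ HN Hfar c0 Habove).
      intros p Hp. exact (Hmin _ (in_map snd _ _ Hp) I).
  - apply in_map_iff in Ha as [[a' c] [Ea Hac]]. cbn [fst] in Ea. subst a'.
    exists (c ⊕ N). apply (extend_far_above _ _ _ _ _ HN Hl Hfar a c Hac Hax).
    intros p Hp. exact (Hmax _ (in_map fst _ _ Hp)).
Qed.

Lemma partial_iso_extend_back {T1 T2 : zchain} N (l : list (T1 * T2)) (y : T2) :
  0 < N -> partial_iso (2 * N) l -> inhabited T1 -> exists x, partial_iso N ((x, y) :: l).
Proof.
  intros HN Hl Hinh.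
  assert (Hl' := partial_iso_swap (2 * N) l ltac:(lia) Hl).
  destruct (partial_iso_extend N (swap_pairs l) y HN Hl' Hinh) as [x Hx].
  exists x. rewrite <- (swap_pairs_involutive ((x, y) :: l)). exact (partial_iso_swap _ _ HN Hx).
Qed.

Lemma partial_iso_exists {T1 T2 : zchain} (e : list T2) : inhabited T1 ->
  forall N, 0 < N -> exists l : list (T1 * T2), partial_iso N l /\ map snd l = e.
Proof.
  intros Hinh. induction e as [|y e IH]; intros N HN.
  - exists nil. split; [intros p p' []|reflexivity].
  - destruct (IH (2 * N) ltac:(lia)) as [l [Hl <-]].
    destruct (partial_iso_extend_back N l y HN Hl Hinh) as [x Hx].
    exists ((x, y) :: l). split; [exact Hx|reflexivity].
Qed.

Fixpoint fo_qdepth (p : fo) : nat :=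
  match p with
  | FNot p => fo_qdepth p
  | FAnd p r | FOr p r | FImp p r => Nat.max (fo_qdepth p) (fo_qdepth r)
  | FEx p | FAll p => S (fo_qdepth p)
  | _ => O
  end.

Lemma pow2_le_max_l m n : 2 ^ Z.of_nat m <= 2 ^ Z.of_nat (Nat.max m n).
Proof. apply Z.pow_le_mono_r; lia. Qed.

Lemma pow2_le_max_r m n : 2 ^ Z.of_nat n <= 2 ^ Z.of_nat (Nat.max m n).
Proof. apply Z.pow_le_mono_r; lia. Qed.

Lemma pow2_succ n : 2 ^ Z.of_nat (S n) = 2 * 2 ^ Z.of_nat n.
Proof. rewrite Nat2Z.inj_succ, Z.pow_succ_r; lia. Qed.

Lemma pow2_pos n : 0 < 2 ^ Z.of_nat n.
Proof. apply Z.pow_pos_nonneg; lia. Qed.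

(* Each quantifier round halves the distance bound that the position preserves. *)
Lemma fo_sat_partial_iso (p : fo) : forall (T1 T2 : zchain) N (l : list (T1 * T2)),
  inhabited T1 -> inhabited T2 -> 2 ^ Z.of_nat (fo_qdepth p) <= N -> partial_iso N l ->
  (fo_sat zlt (map fst l) p <-> fo_sat zlt (map snd l) p).
Proof.
  induction p; intros T1 T2 N l Hi1 Hi2 HN Hl; cbn [fo_qdepth] in HN; cbn [fo_sat].
  - rewrite !nth_error_map.
    destruct (nth_error l i) as [[a c]|] eqn:Ei; cbn [option_map]; [|tauto].
    destruct (nth_error l j) as [[b d]|] eqn:Ej; cbn [option_map fst snd]; [|tauto].
    exact (proj1 (Hl _ _ (nth_error_In _ _ Ei) (nth_error_In _ _ Ej))).
  - rewrite !nth_error_map.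
    destruct (nth_error l i) as [[a c]|] eqn:Ei; cbn [option_map]; [|tauto].
    destruct (nth_error l j) as [[b d]|] eqn:Ej; cbn [option_map fst snd]; [|tauto].
    pose proof (Hl _ _ (nth_error_In _ _ Ei) (nth_error_In _ _ Ej)) as Hab.
    apply pair_equiv_eq in Hab; [|cbn in HN; lia].
    split; intros ->; symmetry; apply Hab; reflexivity.
  - tauto.
  - tauto.
  - rewrite (IHp T1 T2 N l Hi1 Hi2 HN Hl). tauto.
  - pose proof (pow2_le_max_l (fo_qdepth p1) (fo_qdepth p2)).
    pose proof (pow2_le_max_r (fo_qdepth p1) (fo_qdepth p2)).
    rewrite (IHp1 T1 T2 N l Hi1 Hi2 ltac:(lia) Hl), (IHp2 T1 T2 N l Hi1 Hi2 ltac:(lia) Hl).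
    tauto.
  - pose proof (pow2_le_max_l (fo_qdepth p1) (fo_qdepth p2)).
    pose proof (pow2_le_max_r (fo_qdepth p1) (fo_qdepth p2)).
    rewrite (IHp1 T1 T2 N l Hi1 Hi2 ltac:(lia) Hl), (IHp2 T1 T2 N l Hi1 Hi2 ltac:(lia) Hl).
    tauto.
  - pose proof (pow2_le_max_l (fo_qdepth p1) (fo_qdepth p2)).
    pose proof (pow2_le_max_r (fo_qdepth p1) (fo_qdepth p2)).
    rewrite (IHp1 T1 T2 N l Hi1 Hi2 ltac:(lia) Hl), (IHp2 T1 T2 N l Hi1 Hi2 ltac:(lia) Hl).
    tauto.
  - rewrite pow2_succ in HN. set (M := 2 ^ Z.of_nat (fo_qdepth p)) in *.
    assert (HM : 0 < M) by apply pow2_pos.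
    assert (Hl2 : partial_iso (2 * M) l) by (apply (partial_iso_mono N); [lia|exact Hl]).
    split; intros [z Hz].
    + destruct (partial_iso_extend M l z HM Hl2 Hi2) as [y Hy]. exists y.
      exact (proj1 (IHp T1 T2 M _ Hi1 Hi2 (Z.le_refl M) Hy) Hz).
    + destruct (partial_iso_extend_back M l z HM Hl2 Hi1) as [y Hy]. exists y.
      exact (proj2 (IHp T1 T2 M _ Hi1 Hi2 (Z.le_refl M) Hy) Hz).
  - rewrite pow2_succ in HN. set (M := 2 ^ Z.of_nat (fo_qdepth p)) in *.
    assert (HM : 0 < M) by apply pow2_pos.
    assert (Hl2 : partial_iso (2 * M) l) by (apply (partial_iso_mono N); [lia|exact Hl]).
    split; intros Hz z.
    + destruct (partial_iso_extend_back M l z HM Hl2 Hi1) as [y Hy].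
      exact (proj1 (IHp T1 T2 M _ Hi1 Hi2 (Z.le_refl M) Hy) (Hz y)).
    + destruct (partial_iso_extend M l z HM Hl2 Hi2) as [y Hy].
      exact (proj2 (IHp T1 T2 M _ Hi1 Hi2 (Z.le_refl M) Hy) (Hz y)).
Qed.

(* The atom [x ≤ y + k] is read as [¬ y ⊕ k ≺ x]. *)
Fixpoint qf_holds {T : zchain} (e : list T) (p : qf) : Prop :=
  match p with
  | QLt i j k => match nth_error e i, nth_error e j with
                 | Some a, Some b => a ≺ b ⊕ k | _, _ => False end
  | QLe i j k => match nth_error e i, nth_error e j with
                 | Some a, Some b => ~ b ⊕ k ≺ a | _, _ => False end
  | QTrue => True
  | QFalse => False
  | QNot p => ~ qf_holds e p
  | QAnd p r => qf_holds e p /\ qf_holds e r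
  | QOr p r => qf_holds e p \/ qf_holds e r
  end.

Lemma qf_holds_map_iff {A : Type} {T1 T2 : zchain} (u : A -> T1) (v : A -> T2)
    (s : list A) (b : nat) (psi : qf) :
  qf_bound b psi ->
  (forall x y k, In x s -> In y s -> Z.abs k <= Z.of_nat b ->
     (u x ≺ u y ⊕ k <-> v x ≺ v y ⊕ k)) ->
  (qf_holds (map u s) psi <-> qf_holds (map v s) psi).
Proof.
  intros Hb Hs. induction psi; cbn [qf_holds qf_bound] in *; try tauto.
  - rewrite !nth_error_map.
    destruct (nth_error s i) as [x|] eqn:Ei; cbn [option_map]; [|tauto].
    destruct (nth_error s j) as [y|] eqn:Ej; cbn [option_map]; [|tauto].
    exact (Hs x y k (nth_error_In _ _ Ei) (nth_error_In _ _ Ej) Hb).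
  - rewrite !nth_error_map.
    destruct (nth_error s i) as [x|] eqn:Ei; cbn [option_map]; [|tauto].
    destruct (nth_error s j) as [y|] eqn:Ej; cbn [option_map]; [|tauto].
    rewrite !zlt_sh_move, (Hs y x (-k) (nth_error_In _ _ Ej) (nth_error_In _ _ Ei) ltac:(lia)).
    reflexivity.
Qed.

Definition zchain_Z : zchain.
Proof.
  refine {| zc := Z; zlt := Z.lt; zsh := Z.add |}; try (intros; lia).
  intros x y Hy Hxy k. destruct (Hy (y - x)). lia.
Defined.

Lemma qf_holds_Z (e : list Z) (p : qf) : @qf_holds zchain_Z e p <-> qf_sat e p.
Proof.
  induction p; cbn [qf_holds qf_sat].
  - cbn. destruct (nth_error e i), (nth_error e j); reflexivity.
  - cbn. destruct (nth_error e i), (nth_error e j); lia || reflexivity.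
  - reflexivity.
  - reflexivity.
  - rewrite IHp. reflexivity.
  - rewrite IHp1, IHp2. reflexivity.
  - rewrite IHp1, IHp2. reflexivity.
Qed.

Lemma qf_def_transfer (T : zchain) (phi : fo) (psi : qf) (b n : nat) :
  inhabited T -> qf_bound b psi ->
  (forall t : list Z, length t = n -> (fo_sat Z.lt t phi <-> qf_sat t psi)) ->
  forall e : list T, length e = n -> (fo_sat zlt e phi <-> qf_holds e psi).
Proof.
  intros Hinh Hb Hdef e He.
  set (N := 2 ^ Z.of_nat (fo_qdepth phi) + Z.of_nat b + 1).
  assert (HN : 0 < N) by (pose proof (pow2_pos (fo_qdepth phi)); unfold N; lia).
  destruct (@partial_iso_exists zchain_Z T e (inhabits 0) N HN) as [l [Hl <-]].
  assert (Hlen : length (map fst l) = n) by (rewrite length_map, <- He, length_map; reflexivity).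
  rewrite <- (fo_sat_partial_iso phi zchain_Z T N l (inhabits 0) Hinh ltac:(unfold N; lia) Hl).
  rewrite <- (qf_holds_map_iff fst snd l b psi Hb).
  - rewrite qf_holds_Z. exact (Hdef _ Hlen).
  - intros x y k Hx Hy Hk.
    apply (partial_iso_zlt_sh N l); [exact Hl|exact Hx|exact Hy|unfold N; lia].
Qed.

Definition zchain_KZ (K : linorder) : zchain.
Proof.
  refine {| zc := KZ K; zlt := kz_lt K; zsh := fun x k => (fst x, snd x + k) |}.
  - intros x [h|[_ h]]; [exact (lo_irrefl K _ h)|lia].
  - intros x y z [h1|[e1 h1]] [h2|[e2 h2]].
    + left. exact (lo_trans K _ _ _ h1 h2).
    + left. rewrite <- e2. exact h1.
    + left. rewrite e1. exact h2.
    + right. split; [congruence|lia].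
  - intros [x1 x2] [y1 y2]; unfold kz_lt; cbn.
    destruct (lo_total K x1 y1) as [h|[<-|h]]; [auto| |auto].
    destruct (Z.lt_trichotomy x2 y2) as [h|[<-|h]]; auto.
  - intros [x1 x2]. cbn. rewrite Z.add_0_r. reflexivity.
  - intros [x1 x2] a b. cbn. rewrite Z.add_assoc. reflexivity.
  - intros [x1 x2] a b. unfold kz_lt. cbn. split.
    + intros [h|[_ h]]; [destruct (lo_irrefl K _ h)|lia].
    + intro h. right. split; [reflexivity|lia].
  - intros [x1 x2] [y1 y2] Hy [h|[e h]] k; cbn in *; [left; exact h|].
    subst. destruct (Hy (y2 - x2)). f_equal. lia.
Defined.

#[warnings="-projection-no-head-constant"] Canonical zchain_KZ.

Lemma KZ_orbit_fst (K : linorder) (u v : KZ K) m : u = v ⊕ m -> fst u = fst v.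
Proof. intros ->. reflexivity. Qed.

Lemma diff_is_zlt_sh (K : linorder) (u v u' v' : KZ K) k :
  (forall d, diff_is K u v d <-> diff_is K u' v' d) -> (u ≺ v ⊕ k <-> u' ≺ v' ⊕ k).
Proof.
  intro Hd. destruct (classic (fst u = fst v)) as [Hfst|Hfst].
  - assert (Hu : u = v ⊕ (snd u - snd v)).
    { destruct u, v. cbn in *. subst. f_equal. lia. }
    assert (Hu' : u' = v' ⊕ (snd u - snd v)) by exact (proj1 (Hd (Fin _)) Hu).
    rewrite Hu, Hu', !zlt_sh2. reflexivity.
  - assert (Hfar : forall (x y : KZ K) m, fst x <> fst y -> x <> y ⊕ m)
      by (intros x y m H E; exact (H (KZ_orbit_fst K _ _ _ E))).
    rewrite (zlt_sh_far_r _ u v k) by (intros m _; exact (Hfar _ _ m Hfst)).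
    destruct (zlt_total _ u v) as [h|[h|h]]; [| exact (False_ind _ (Hfst (f_equal fst h)))|].
    + destruct (proj1 (Hd NInf) (conj Hfst h)) as [Hfst' h'].
      rewrite (zlt_sh_far_r _ u' v' k) by (intros m _; exact (Hfar _ _ m Hfst')). tauto.
    + destruct (proj1 (Hd PInf) (conj Hfst h)) as [Hfst' h'].
      rewrite (zlt_sh_far_r _ u' v' k) by (intros m _; exact (Hfar _ _ m Hfst')).
      split; intro h''; exfalso; [exact (zlt_asym _ _ _ h h'')|exact (zlt_asym _ _ _ h' h'')].
Qed.

Lemma sim_sym K1 K2 S q f g : sim K1 K2 S q f g -> sim K1 K2 S q g f.
Proof.
  intros [Hconn [Hdiff Hord]]. split; [|split].
  - intros x y. symmetry. apply Hconn.
  - intros x y H d. symmetry. apply Hdiff, Hconn, H.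
  - intros x y H. symmetry. apply Hord. rewrite Hconn. exact H.
Qed.

Lemma sim_zlt_sh K1 K2 S q (f g : {x | S x} -> KZ K2) x y k :
  sim K1 K2 S q f g -> Z.abs k <= Z.of_nat q -> (f x ≺ f y ⊕ k <-> g x ≺ g y ⊕ k).
Proof.
  intros [Hconn [Hdiff Hord]] Hk.
  destruct (classic (connected K1 K2 S f q x y)) as [Hc|Hc].
  - apply diff_is_zlt_sh, Hdiff, Hc.
  - assert (Hc' : ~ connected K1 K2 S g q x y) by (rewrite <- Hconn; exact Hc).
    assert (Hfar : forall h : {x | S x} -> KZ K2, ~ connected K1 K2 S h q x y ->
                     forall m, Z.abs m <= Z.abs k -> h x <> h y ⊕ m).
    { intros h Hh m Hm E. apply Hh, rt_step. exists m. split; [exact E|lia]. }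
    rewrite !zlt_sh_far_r by (apply Hfar; assumption).
    exact (Hord x y Hc).
Qed.

Lemma qf_bound_le d q psi : qf_bound d psi -> (d <= q)%nat -> qf_bound q psi.
Proof. induction psi; cbn; intuition lia. Qed.

Lemma qe_degree_def_bound G q : qe_degree G q -> forall i, qf_def_bound (defn G i) (arity G i) q.
Proof.
  intros [Hex [Hle _]] i. destruct (Hex i) as [d Hd].
  pose proof (Hle i d Hd) as Hdq. destruct Hd as [[psi [Hb Hpsi]] _].
  exists psi. split; [exact (qf_bound_le d q psi Hb Hdq)|exact Hpsi].
Qed.

Lemma is_hom_sim G q K1 K2 S (f g : {x | S x} -> KZ K2) :
  qe_degree G q -> sim K1 K2 S q f g -> is_hom K1 K2 S G f -> is_hom K1 K2 S G g.
Proof.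
  intros Hq Hs Hf i t Ht Hsat.
  destruct (qe_degree_def_bound G q Hq i) as [psi [Hb Hpsi]].
  destruct t as [|s t']; [exact (Hf i nil Ht Hsat)|].
  (* The transfer to ℤ needs κ₂.ℤ inhabited, which a nonempty tuple provides. *)
  assert (Hinh : inhabited (KZ K2)) by exact (inhabits (f s)).
  assert (Hlen : forall h : {x | S x} -> KZ K2, length (map h (s :: t')) = arity G i)
    by (intro h; rewrite length_map; exact Ht).
  apply (qf_def_transfer _ _ psi q _ Hinh Hb Hpsi _ (Hlen g)).
  rewrite <- (qf_holds_map_iff f g (s :: t') q psi Hb)
    by (intros; apply (sim_zlt_sh K1 K2 S q f g); assumption).
  apply (qf_def_transfer _ _ psi q _ Hinh Hb Hpsi _ (Hlen f)).
  exact (Hf i _ Ht Hsat).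
Qed.

Theorem mainTheorem6 (G : reduct) (q : nat) (K1 K2 : linorder)
  (S : KZ K1 -> Prop) (f g : {x | S x} -> KZ K2) :
  qe_degree G q -> sim K1 K2 S q f g ->
  (is_hom K1 K2 S G f <-> is_hom K1 K2 S G g).
Proof.
  intros Hq Hs. split; apply (is_hom_sim G q K1 K2 S _ _ Hq).
  - exact Hs.
  - exact (sim_sym _ _ _ _ _ _ Hs).
Qed.
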